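(* If $n$ is a non-negative integer and $p$ is a positive integer, then $$\sum_{k = 1}^n \sum_{j = 0}^{k - 1} \frac{1}{(k - j)(n - j + p)} = \frac{1}{2}\left( H_n^2 - H_n^{(2)} \right) - \frac{1}{2}\left( H_{p - 1}^2 + H_{p - 1}^{(2)} \right) + H_{p - 1} \left( H_{p + n - 1} - H_n \right) + H_n \left( H_{p + n} - H_n \right) - \sum_{k = 1}^{p - 1} \frac{H_{k - 1}}{n + k}.$$ In particular, $$\sum_{k = 1}^n \sum_{j = 0}^{k - 1} \frac{1}{(k - j)(n + 1 - j)} = \frac{1}{2}\left( H_n^2 - H_n^{(2)} \right) + \frac{H_n}{n + 1}.$$
   Context: $H_n=\sum_{m=1}^n\frac1m$ and $H_n^{(2)}=\sum_{m=1}^n\frac1{m^2}$ (with $H_0=H_0^{(2)}=0$). Empty sums are zero. *)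

From mathcomp Require Import all_boot all_order all_algebra.
Set Implicit Arguments. Unset Strict Implicit. Unset Printing Implicit Defensive.
Import Order.TTheory GRing.Theory Num.Theory.
Local Open Scope ring_scope.

Definition harm (R : fieldType) (n : nat) : R :=
  \sum_(1 <= m < n.+1) (m%:R)^-1.

Definition harm2 (R : fieldType) (n : nat) : R :=
  \sum_(1 <= m < n.+1) ((m%:R) ^+ 2)^-1.

From mathcomp Require Import all_boot all_order all_algebra.
From mathcomp Require Import ring zify.
Set Implicit Arguments. Unset Strict Implicit. Unset Printing Implicit Defensive.
Import Order.TTheory GRing.Theory Num.Theory.
Local Open Scope ring_scope.

(* Grouping the terms by i = n - j, the inner sum over m = k - j is H_i, so the
   double sum equals \sum_(i = 1..n) H_i / (i + p).  Its closed form F(n, p)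
   is then checked by induction on n: F(0, p) = 0 is the identity
   \sum_(k = 1..m) H_(k-1) / k = (H_m^2 - H^(2)_m) / 2, and the defect
   F(n+1, p) - F(n, p) - H_(n+1) / (n+1+p) does not change when p increases
   and vanishes for p = 1. *)

Lemma sum_triangle_shift (V : nmodType) (F : nat -> nat -> V) n :
  \sum_(1 <= k < n.+1) \sum_(0 <= j < k) F (k - j)%N j
  = \sum_(0 <= j < n) \sum_(1 <= m < (n - j).+1) F m j.
Proof.
elim: n => [|n IHn]; first by rewrite !big_geq.
rewrite big_nat_recr //= IHn addrC [RHS]big_nat_recr //= big_nat_recr //=.
rewrite subSnn big_nat1 addrAC -big_split /=; congr (_ + _).
apply: eq_big_nat => j /andP[_ ltjn].
by rewrite subSn 1?ltnW // [RHS]big_nat_recr //= addrC.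
Qed.

Section Harmonic.
Variable R : numFieldType.

Lemma harm0 : harm R 0 = 0.
Proof. by rewrite /harm big_geq. Qed.

Lemma harm2_0 : harm2 R 0 = 0.
Proof. by rewrite /harm2 big_geq. Qed.

Lemma harmS n : harm R n.+1 = harm R n + n.+1%:R^-1.
Proof. by rewrite /harm big_nat_recr. Qed.

Lemma harm2S n : harm2 R n.+1 = harm2 R n + (n.+1%:R ^+ 2)^-1.
Proof. by rewrite /harm2 big_nat_recr. Qed.

Lemma sum_triangle_harm n p :
  \sum_(1 <= k < n.+1) \sum_(0 <= j < k) ((k - j)%:R * (n - j + p)%:R)^-1
  = \sum_(1 <= i < n.+1) harm R i / (i + p)%:R.
Proof.
rewrite (sum_triangle_shift (fun m j => (m%:R * (n - j + p)%:R)^-1)) /=.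
rewrite big_add1 big_nat_rev /=; apply: eq_big_nat => j /andP[_ ltjn].
have -> : (n - (0 + n - j.+1))%N = j.+1 by lia.
by rewrite /harm mulr_suml; apply: eq_bigr => m _; rewrite invfM.
Qed.

Ltac natr_neq0 := rewrite ?(natr1, nat1r, =^~ natrD) ?pnatr_eq0 //.

Lemma sum_harm_pred_div n :
  \sum_(1 <= k < n.+1) harm R k.-1 / k%:R = 2^-1 * (harm R n ^+ 2 - harm2 R n).
Proof.
elim: n => [|n IHn]; first by rewrite big_geq // harm0 harm2_0 expr0n subrr mulr0.
rewrite big_nat_recr //= IHn harmS harm2S; field; natr_neq0.
Qed.

Definition harm_shift_closed n p : R :=
  2^-1 * (harm R n ^+ 2 - harm2 R n)
  - 2^-1 * (harm R p.-1 ^+ 2 + harm2 R p.-1)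
  + harm R p.-1 * (harm R (p + n).-1 - harm R n)
  + harm R n * (harm R (p + n) - harm R n)
  - \sum_(1 <= k < p) harm R k.-1 / (n + k)%:R.

Lemma harm_shift_closed0n q : harm_shift_closed 0 q.+1 = 0.
Proof.
rewrite /harm_shift_closed harm0 harm2_0 addn0 /=.
under eq_bigr => k _ do rewrite add0n.
by rewrite sum_harm_pred_div; field.
Qed.

Lemma harm_shift_closed_incr_invariant n q :
  harm_shift_closed n.+1 q.+2 - harm_shift_closed n q.+2 - harm R n.+1 / (n.+1 + q.+2)%:R
  = harm_shift_closed n.+1 q.+1 - harm_shift_closed n q.+1
    - harm R n.+1 / (n.+1 + q.+1)%:R.
Proof.
rewrite /harm_shift_closed /= !(big_nat_recr q.+1) //= !addSn !addnS /=.
rewrite !harmS !harm2S; field; natr_neq0.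
Qed.

Lemma harm_shift_closedSn n q :
  harm_shift_closed n.+1 q.+1 = harm_shift_closed n q.+1 + harm R n.+1 / (n.+1 + q.+1)%:R.
Proof.
apply/eqP; rewrite -subr_eq0 opprD addrA; apply/eqP.
elim: q => [|q IHq]; last by rewrite harm_shift_closed_incr_invariant.
rewrite /harm_shift_closed /= !big_geq // harm0 harm2_0 !add1n /= !harmS !harm2S.
field; natr_neq0.
Qed.

Lemma sum_harm_div_shift n q :
  \sum_(1 <= i < n.+1) harm R i / (i + q.+1)%:R = harm_shift_closed n q.+1.
Proof.
elim: n => [|n IHn]; first by rewrite big_geq // harm_shift_closed0n.
by rewrite big_nat_recr //= IHn harm_shift_closedSn.
Qed.

Lemma harm_shift_closedn1 n :
  harm_shift_closed n 1 = 2^-1 * (harm R n ^+ 2 - harm2 R n) + harm R n / n.+1%:R.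
Proof.
rewrite /harm_shift_closed /= big_geq // harm0 harm2_0 add1n harmS.
field; natr_neq0.
Qed.

End Harmonic.

Theorem proposition11 (R : realFieldType) (n p : nat) (hp : (0 < p)%N) :
  (\sum_(1 <= k < n.+1) \sum_(0 <= j < k)
      (((k - j)%:R * (n - j + p)%:R)^-1 : R)
   = 2^-1 * (harm R n ^+ 2 - harm2 R n)
     - 2^-1 * (harm R p.-1 ^+ 2 + harm2 R p.-1)
     + harm R p.-1 * (harm R (p + n).-1 - harm R n)
     + harm R n * (harm R (p + n) - harm R n)
     - \sum_(1 <= k < p) (harm R k.-1 / (n + k)%:R))
  /\
  (\sum_(1 <= k < n.+1) \sum_(0 <= j < k)
      (((k - j)%:R * (n.+1 - j)%:R)^-1 : R)
   = 2^-1 * (harm R n ^+ 2 - harm2 R n) + harm R n / (n.+1)%:R).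
Proof.
split.
  by case: p hp => // q _; rewrite sum_triangle_harm sum_harm_div_shift.
rewrite -harm_shift_closedn1 -sum_harm_div_shift -sum_triangle_harm.
apply: eq_big_nat => k /andP[_ ltkn]; apply: eq_big_nat => j /andP[_ ltjk].
by have -> : (n.+1 - j = n - j + 1)%N by lia.
Qed.
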